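(* For every integer $k\ge0$, let $b_i$ denote the coefficient of $z^i$ in the power series expansion of $\left(\frac{\ln(1+z)}{z}\right)^{4k+1}$. Then $\nu(b_{4k})=-4k$.
   Context: $\nu(r)$ denotes the 2-adic valuation of a nonzero rational number $r$ (e.g. $\nu(4)=2$, $\nu(3)=0$, $\nu(1/8)=-3$). $\frac{\ln(1+z)}{z}=1-\frac z2+\frac{z^2}{3}-\frac{z^3}{4}+\cdots$. *)

From HB Require Import structures.
From mathcomp Require Import all_boot all_order all_algebra.
Set Implicit Arguments. Unset Strict Implicit. Unset Printing Implicit Defensive.
Import Order.TTheory GRing.Theory Num.Theory.
Local Open Scope ring_scope.

(* 2-adic valuation of a rational number r (meaningful for r <> 0):
   nu(r) = v_2(numerator) - v_2(denominator). *)
Definition nu2 (r : rat) : int :=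
  (logn 2 `|numq r|%N)%:Z - (logn 2 `|denq r|%N)%:Z.

(* Truncation at degree N of the power series ln(1+z)/z = sum_{j>=0} (-1)^j z^j/(j+1). *)
Definition lnser (N : nat) : {poly rat} :=
  \poly_(j < N.+1) ((-1) ^+ j / (j.+1)%:R).

(* Coefficient of z^i in (ln(1+z)/z)^n; truncating at degree i does not
   affect the coefficient of z^i. *)
Definition lncoef (n i : nat) : rat := ((lnser i) ^+ n)`_i.

From HB Require Import structures.
From mathcomp Require Import all_boot all_order all_algebra.
From mathcomp Require Import ring.
Import Order.TTheory GRing.Theory Num.Theory.
Local Open Scope ring_scope.

(* Write Q = ln(1 + z) / z. The differential equation z (1 + z) Q' = 1 - (1 + z) Q
   yields a recurrence for the coefficients of the powers of Q which identifies
   them with Stirling numbers of the first kind: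
   [z^m] Q^n = (-1)^m n! stirling1 (m + n) n / (m + n)!.
   For n = m + 1 the Stirling number stirling1 (2m + 1) (m + 1) is odd, because
   modulo 2 the rising factorial of length 2m is (x^2 + x)^m; and the 2-adic
   valuation of (2m + 1)! is m + nu(m!). Hence nu([z^m] Q^(m+1)) = nu(m + 1) - m,
   which is -4k for m = 4k. *)

Lemma nu2_natr_div (p q : nat) : (0 < p)%N -> (0 < q)%N ->
  nu2 (p%:R / q%:R) = (logn 2 p)%:Z - (logn 2 q)%:Z.
Proof.
move=> p_gt0 q_gt0; set x : rat := p%:R / q%:R.
have x_neq0 : x != 0 by rewrite mulf_neq0 ?invr_eq0 ?pnatr_eq0 -?lt0n.
have cross : (`|numq x| * q = p * `|denq x|)%N.
  have : numq x * q%:Z = p%:Z * denq x.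
    apply: (@intr_inj rat); rewrite !intrM numqE /x.
    by rewrite -!pmulrn mulrAC divfK ?pnatr_eq0 -?lt0n.
  by move/(congr1 absz); rewrite !abszM !absz_nat.
have num_gt0 : (0 < `|numq x|)%N by rewrite absz_gt0 numq_eq0.
have den_gt0 : (0 < `|denq x|)%N by rewrite absz_gt0 denq_neq0.
move/(congr1 (logn 2)): cross; rewrite !lognM // => cross.
rewrite /nu2; apply/eqP; rewrite subr_eq addrAC eq_sym subr_eq -!PoszD.
by rewrite cross addnC.
Qed.

Lemma logn2_odd n : odd n -> logn 2 n = 0%N.
Proof. by move=> n_odd; rewrite logn_coprime // coprime2n. Qed.

Lemma logn2_fact_double m : logn 2 (m.*2)`! = (m + logn 2 m`!)%N.
Proof.
elim: m => [|m IHm] //.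
rewrite doubleS !factS -doubleS -mul2n !lognM ?muln_gt0 ?fact_gt0 //.
have odd_dS : odd m.*2.+1 by rewrite /= odd_double.
rewrite (logn_prime 2 (isT : prime 2)) (logn2_odd _ odd_dS) IHm.
by rewrite eqxx add0n add1n !addSn addnCA.
Qed.

(* Unsigned Stirling numbers of the first kind, the coefficients of the
   rising factorial x (x + 1) ... (x + n - 1). *)
Fixpoint stirling1 (n k : nat) : nat :=
  match n, k with
  | 0, 0 => 1
  | 0, _.+1 | _.+1, 0 => 0
  | n'.+1, k'.+1 => stirling1 n' k' + n' * stirling1 n' k
  end.

Lemma stirling1SS n k :
  stirling1 n.+1 k.+1 = (stirling1 n k + n * stirling1 n k.+1)%N.
Proof. by []. Qed.

Lemma stirling1_small n k : (n < k)%N -> stirling1 n k = 0%N.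
Proof. by elim: n k => [|n IHn] [|k] //= ltnk; rewrite !IHn ?muln0 // ltnW. Qed.

Lemma stirling1nn n : stirling1 n n = 1%N.
Proof. by elim: n => // n IHn; rewrite stirling1SS IHn stirling1_small ?muln0. Qed.

Lemma odd_stirling1_doubleSS j k :
  odd (stirling1 (j.*2).+1 k.+1) = odd (stirling1 j.*2 k).
Proof. by rewrite stirling1SS oddD oddM odd_double andFb addbF. Qed.

(* Modulo 2 the rising factorial of length 2j is (x^2 + x)^j. *)
Lemma odd_stirling1_double j k :
  odd (stirling1 j.*2 k) = (j <= k)%N && odd 'C(j, k - j).
Proof.
elim: j k => [|j IHj] [|k] //.
rewrite doubleS stirling1SS oddD oddM oddS odd_double andTb.
rewrite odd_stirling1_doubleSS IHj.
case: k => [|k]; first by case: j {IHj}.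
rewrite odd_stirling1_doubleSS IHj !ltnS subSS.
case: (ltngtP j k) => [ltjk|ltkj|<-].
- by rewrite leqW ?subSn ?binS ?oddD 1?addbC // ltnW.
- have/eqP -> : (k.+1 - j == 0)%N by rewrite subn_eq0.
  by rewrite !bin0.
- by rewrite subnn subSnn bin0 !bin1 leqnSn.
Qed.

Section TruncatedLogSeries.

Variable N : nat.

Local Notation Q := (lnser N).
Local Notation c := ((-1) ^+ N *: 'X^(N.+1) : {poly rat}).

Lemma coef_lnser i : Q`_i = if (i <= N)%N then (-1) ^+ i / i.+1%:R else 0.
Proof. by rewrite coef_poly ltnS. Qed.

(* The derivative of the truncated logarithm X Q is the truncated geometric
   series of 1 / (1 + X). *)
Lemma deriv_Xlnser : (1 + 'X) * ('X * Q)^`() = 1 + c.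
Proof.
have coef_dL i : (('X * Q)^`())`_i = if (i <= N)%N then (-1) ^+ i else 0.
  rewrite coef_deriv coefXM /= coef_lnser.
  case: ifP => _; last by rewrite mul0rn.
  by rewrite -[LHS]mulr_natr divfK ?pnatr_eq0.
apply/polyP => -[|i].
  by rewrite mulrDl mul1r !coefD coefXM coef1 coefZ coefXn coef_dL mulr0 !addr0.
rewrite mulrDl mul1r !coefD coefXM coef1 coefZ coefXn /= !coef_dL eqSS add0r.
case: (ltngtP i N) => [ltiN|ltNi|<-].
- by rewrite exprS mulN1r addNr mulr0.
- by rewrite addr0 mulr0.
- by rewrite add0r mulr1.
Qed.

(* The truncation of [X (1 + X) Q' = 1 - (1 + X) Q], the differential
   equation of [ln(1 + X) / X]. *)
Lemma lnser_ode : 'X * (1 + 'X) * Q^`() = 1 - (1 + 'X) * Q + c.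
Proof.
have dL : ('X * Q)^`() = Q + 'X * Q^`() by rewrite derivM derivX mul1r.
by rewrite addrAC -deriv_Xlnser dL; ring.
Qed.

Lemma lnser_exp_ode n :
  'X * (1 + 'X) * (Q ^+ n.+1)^`() = Q ^+ n * (1 - (1 + 'X) * Q + c) *+ n.+1.
Proof. by rewrite deriv_exp -lnser_ode /=; ring. Qed.

Lemma coefX_deriv (p : {poly rat}) i : ('X * p^`())`_i = p`_i *+ i.
Proof. by rewrite coefXM; case: i => [|i] //=; rewrite coef_deriv. Qed.

Lemma coefX1X_deriv (p : {poly rat}) i :
  ('X * (1 + 'X) * p^`())`_i.+1 = p`_i.+1 *+ i.+1 + p`_i *+ i.
Proof.
by rewrite mulrDr mulr1 mulrDl -mulrA coefD !coefX_deriv coefXM /= coefX_deriv.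
Qed.

Local Notation a n m := ((Q ^+ n)`_m).

Lemma coef_lnser_exp_rec n m : (m < N)%N ->
  a n.+1 m.+1 * (m + n).+2%:R = a n m.+1 * n.+1%:R - a n.+1 m * (m + n).+1%:R.
Proof.
move=> ltmN.
have := congr1 (fun p : {poly rat} => p`_m.+1) (lnser_exp_ode n).
rewrite /= coefX1X_deriv coefMn mulrDr mulrBr mulr1 mulrDl mul1r.
rewrite mulrDr mulrCA -exprSr -scalerAr [_ * 'X^_]mulrC !coefD !coefN.
rewrite coefZ coefXnM ltnS ltmN mulr0 addr0 /= coefD coefXM /=.
move: (a n.+1 m.+1) (a n m.+1) (a n.+1 m) => x y z /eqP.
rewrite -subr_eq0 => /eqP hyp.
by apply/eqP; rewrite -subr_eq0 -hyp; apply/eqP; ring.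
Qed.

Lemma coef0_lnser_exp n : a n 0 = 1.
Proof.
elim: n => [|n IHn]; first by rewrite expr0 coef1.
by rewrite exprS coef0M IHn coef_lnser mulr1 expr0 divr1.
Qed.

(* Truncated form of (ln(1 + z))^n / n! = \sum_M (-1)^(M - n) stirling1 M n z^M / M!. *)
Lemma coef_lnser_exp n m : (m <= N)%N ->
  a n m * (m + n)`!%:R = (-1) ^+ m * n`!%:R * (stirling1 (m + n) n)%:R.
Proof.
elim: m n => [|m IHm] n leqmN.
  by rewrite coef0_lnser_exp stirling1nn expr0 !mul1r mulr1.
elim: n => [|n IHn].
  by rewrite expr0 coef1 mul0r addn0 mulr0.
have -> : (m.+1 + n.+1)`! = ((m + n).+2 * (m + n).+1`!)%N by rewrite addSn addnS.
rewrite natrM mulrA coef_lnser_exp_rec // mulrBl.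
rewrite [_ * n.+1%:R * _]mulrAC [_ * (m + n).+1%:R * _]mulrAC.
rewrite -addSn IHn addSnnS IHm 1?ltnW // addSn stirling1SS factS.
by rewrite natrD !natrM exprS; ring.
Qed.

End TruncatedLogSeries.

Lemma nu2_signr (m : nat) (x : rat) : nu2 ((-1) ^+ m * x) = nu2 x.
Proof. by rewrite -signr_odd /nu2 numq_sign_mul denq_mulr_sign abszMsign. Qed.

Lemma odd_stirling1_double_succ m : odd (stirling1 (m.*2).+1 m.+1).
Proof. by rewrite odd_stirling1_doubleSS odd_stirling1_double leqnn subnn bin0. Qed.

Lemma lncoef_succ_diag m : lncoef m.+1 m =
  (-1) ^+ m * ((m.+1)`! * stirling1 (m.*2).+1 m.+1)%:R / ((m.*2).+1)`!%:R.
Proof.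
have := @coef_lnser_exp m m.+1 m (leqnn m).
rewrite addnS addnn natrM mulrA => <-.
by rewrite mulfK // pnatr_eq0 -lt0n fact_gt0.
Qed.

Lemma lncoef_succ_diag_neq0 m : lncoef m.+1 m != 0.
Proof.
have s_gt0 := odd_gt0 (odd_stirling1_double_succ m).
rewrite lncoef_succ_diag -mulrA mulf_neq0 ?signr_eq0 // mulf_neq0 //.
  by rewrite pnatr_eq0 -lt0n muln_gt0 fact_gt0.
by rewrite invr_eq0 pnatr_eq0 -lt0n fact_gt0.
Qed.

Lemma nu2_lncoef_succ_diag m : nu2 (lncoef m.+1 m) = (logn 2 m.+1)%:Z - m%:Z.
Proof.
have odd_s := odd_stirling1_double_succ m.
have odd_dS : odd (m.*2).+1 by rewrite /= odd_double.
have [s_gt0 dS_gt0] := (odd_gt0 odd_s, odd_gt0 odd_dS).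
rewrite lncoef_succ_diag -mulrA nu2_signr nu2_natr_div ?muln_gt0 ?fact_gt0 //.
rewrite !factS !lognM ?muln_gt0 ?fact_gt0 // logn2_fact_double.
by rewrite (logn2_odd _ odd_s) (logn2_odd _ odd_dS) !PoszD; ring.
Qed.

Theorem lemmaA (k : nat) :
  lncoef (4 * k + 1) (4 * k) != 0 /\
  nu2 (lncoef (4 * k + 1) (4 * k)) = - (4 * k)%:Z.
Proof.
rewrite addn1; split; first exact: lncoef_succ_diag_neq0.
by rewrite nu2_lncoef_succ_diag logn2_odd ?add0r // oddS oddM.
Qed.
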